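(* Let $X$ be a topological vector space, $Z$ a locally convex topological vector space, $C\subseteq Z$ a nonempty closed convex cone with $C^-\neq\{0\}$, and $f:X\to\mathcal{F}(Z,C)$. If $f(x_0)$ is a convex set and $\varphi_{(f,z^* )}$ is lower semicontinuous at $x_0$ for every $z^*\in C^-\setminus\{0\}$, then $f$ is lower lattice-semicontinuous at $x_0$.
   Context: $\mathcal{F}(Z,C)=\{A\subseteq Z\colon A=\operatorname{cl}(A+C)\}$ (empty set included); $C^-=\{z^*\in Z^*\colon z^*(z)\le0\ \forall z\in C\}$. $\varphi_{(f,z^* )}(x)=\inf_{z\in f(x)}(-z^*(z))$, with $\inf\emptyset=+\infty$. $f$ is lower lattice-semicontinuous at $x_0$ iff $f(x_0)\supseteq\bigcap_{U\in\mathcal{N}(x_0)}\operatorname{cl}\bigcup_{x\in U}f(x)$ ($\mathcal{N}(x_0)$ the neighborhoods of $x_0$); equivalently, for every $z_0\notin f(x_0)$ there exist a neighborhood $U$ of $x_0$ and a neighborhood $V$ of $z_0$ with $z\notin f(x)$ for all $x\in U$, $z\in V$. *)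

From HB Require Import structures.
From mathcomp Require Import all_boot all_order all_algebra.
From mathcomp Require Import all_classical all_reals all_analysis.
Set Implicit Arguments. Unset Strict Implicit. Unset Printing Implicit Defensive.
Import Order.TTheory GRing.Theory Num.Theory.
Local Open Scope classical_set_scope.
Local Open Scope ring_scope.

Section defs.
Context {R : realType}.

Definition msum {Z : lmodType R} (A B : set Z) : set Z :=
  [set a + b | a in A & b in B].

Definition closed_convex_cone {Z : tvsType R} (C : set Z) : Prop :=
  closed C /\ convex_set C /\ (forall (t : R) z, 0 <= t -> C z -> C (t *: z)).

Definition in_dual {Z : tvsType R} (g : Z -> R) : Prop :=
  (forall (a : R) (x y : Z), g (a *: x + y) = a * g x + g y) /\
  continuous (g : Z -> R^o).

Definition polar_cone {Z : tvsType R} (C : set Z) (g : Z -> R) : Prop :=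
  in_dual g /\ (forall z, C z -> g z <= 0).

Definition in_FZC {Z : tvsType R} (C : set Z) (A : set Z) : Prop :=
  A = closure (msum A C).

(* phi_(f,g)(x) = inf_{z in f x} (- g(z)),  inf of empty set = +oo *)
Definition phi {X : Type} {Z : tvsType R} (f : X -> set Z) (g : Z -> R)
  (x : X) : \bar R :=
  ereal_inf [set ((- g z)%:E) | z in f x].

(* lower semicontinuity at a point of an extended-real function
   (pointwise version of mathcomp's lower_semicontinuous) *)
Definition lsc_at {X : topologicalType} (h : X -> \bar R) (x0 : X) : Prop :=
  forall a : R, (a%:E < h x0)%E ->
    exists2 V, nbhs x0 V & forall y, V y -> (a%:E < h y)%E.

End defs.

Definition lower_lattice_sc_at {X Z : topologicalType}
  (f : X -> set Z) (x0 : X) : Prop :=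
  \bigcap_(U in nbhs x0) closure (\bigcup_(x in U) f x) `<=` f x0.

From HB Require Import structures.
From mathcomp Require Import all_boot all_order all_algebra.
From mathcomp Require Import all_classical all_reals all_analysis.
From mathcomp Require Import lra.
Import Order.TTheory GRing.Theory Num.Theory.
Local Open Scope classical_set_scope.
Local Open Scope ring_scope.
Set Implicit Arguments. Unset Strict Implicit.

(* If z0 is not in f x0, separate it from the closed convex set f x0 by a
   continuous linear functional g with a gap d > 0 (geometric Hahn-Banach: the
   gauge of a convex neighbourhood of 0 dominates a functional obtained from the
   analytic Hahn-Banach theorem, itself proved by Zorn's lemma on graphs).
   Since f x0 + C is contained in f x0, g is nonpositive on C, so g lies in C^-.
   The gap gives phi_(f,g)(x0) >= -g(z0) + d; lower semicontinuity keeps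
   phi_(f,g) above -g(z0) + d/2 near x0, and continuity of g then keeps the
   sets f x away from a neighbourhood of z0.  When f x0 is empty,
   phi_(f,g)(x0) = +oo for every g and any nonzero element of C^- works. *)

Section linear_functional.
Variables (R : numDomainType) (E : lmodType R) (g : E -> R).
Hypothesis g_lin : forall a x y, g (a *: x + y) = a * g x + g y.

Lemma lin0 : g 0 = 0.
Proof.
have /eqP := g_lin 1 0 0; rewrite scaler0 add0r mul1r addrC -subr_eq subrr.
by rewrite eq_sym => /eqP.
Qed.

Lemma linD x y : g (x + y) = g x + g y.
Proof. by have := g_lin 1 x y; rewrite scale1r mul1r. Qed.

Lemma linZ a x : g (a *: x) = a * g x.
Proof. by have := g_lin a x 0; rewrite !addr0 lin0 addr0. Qed.

Lemma linN x : g (- x) = - g x.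
Proof. by rewrite -scaleN1r linZ mulN1r. Qed.

Lemma linB x y : g (x - y) = g x - g y.
Proof. by rewrite linD linN. Qed.

End linear_functional.

Lemma convex_setP (R : realType) (M : lmodType R) (S : set M) :
  convex_set S <->
  (forall l x y, 0 <= l -> l <= 1 -> S x -> S y -> S (l *: x + (1 - l) *: y)).
Proof.
split=> [S_convex l x y l0 l1 Sx Sy|S_comb x y l].
  by have := S_convex x y (@Itv01 R l l0 l1) (mem_set Sx) (mem_set Sy); rewrite inE.
by rewrite !inE => Sx Sy; exact: S_comb (ge0 l) (le1 l) Sx Sy.
Qed.

Section convex_combination.
Variables (R : ringType) (M : lmodType R) (l : R).

Lemma scale_comb_id (u : M) : l *: u + (1 - l) *: u = u.
Proof. by rewrite -scalerDl addrC subrK scale1r. Qed.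

Lemma scale_comb_sub (u v u' v' : M) :
  l *: (u - v) + (1 - l) *: (u' - v') = (l *: u + (1 - l) *: u') - (l *: v + (1 - l) *: v').
Proof. by rewrite !scalerBr opprD addrACA. Qed.

End convex_combination.

Section hahn_banach.
Variables (R : realType) (E : lmodType R) (p : E -> R).

(* Partial linear functionals below p, encoded by their graphs so that a chain
   of extensions is joined by its union. *)
Definition dominated_graph (G : set (E * R)) : Prop :=
  [/\ forall a x r y s, G (x, r) -> G (y, s) -> G (a *: x + y, a * r + s),
      forall x r s, G (x, r) -> G (x, s) -> r = s &
      forall x r, G (x, r) -> r <= p x].

Definition graph_adjoin (G : set (E * R)) (x1 : E) (c : R) : set (E * R) :=
  [set z | exists m r t, G (m, r) /\ z = (m + t *: x1, r + t * c)].

Lemma dominated_graph00 G x r : dominated_graph G -> G (x, r) -> G (0, 0).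
Proof.
by case=> Glin _ _ Gx; have := Glin (-1) _ _ _ _ Gx Gx; rewrite scaleN1r mulN1r !addNr.
Qed.

Lemma dominated_graphZ G a x r : dominated_graph G -> G (x, r) -> G (a *: x, a * r).
Proof.
move=> dG Gx; have [Glin _ _] := dG.
by have := Glin a _ _ _ _ Gx (dominated_graph00 dG Gx); rewrite !addr0.
Qed.

Lemma dominated_graph_bigcup (F : set (set (E * R))) :
  (forall G, F G -> dominated_graph G) -> total_on F subset ->
  dominated_graph (\bigcup_(G in F) G).
Proof.
move=> Fdom Ftot; split.
- move=> a x r y s [G1 FG1 G1x] [G2 FG2 G2y].
  have [G12|G21] := Ftot _ _ FG1 FG2.
    by exists G2 => //; have [Glin _ _] := Fdom _ FG2; exact: Glin (G12 _ G1x) G2y.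
  by exists G1 => //; have [Glin _ _] := Fdom _ FG1; exact: Glin G1x (G21 _ G2y).
- move=> x r s [G1 FG1 G1x] [G2 FG2 G2y].
  have [G12|G21] := Ftot _ _ FG1 FG2.
    by have [_ Gfun _] := Fdom _ FG2; exact: Gfun (G12 _ G1x) G2y.
  by have [_ Gfun _] := Fdom _ FG1; exact: Gfun G1x (G21 _ G2y).
- by move=> x r [G FG Gx]; have [_ _ Gp] := Fdom _ FG; exact: Gp Gx.
Qed.

Hypothesis p_subadd : forall x y, p (x + y) <= p x + p y.
Hypothesis p_subhom : forall s x, 0 < s -> p (s *: x) <= s * p x.

Lemma subhom_inv t y : 0 < t -> t * p (t^-1 *: y) <= p y.
Proof. by move=> t0; rewrite -ler_pdivlMl //; apply: p_subhom; rewrite invr_gt0. Qed.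

Lemma dominated_graph_gap G x1 x0 r0 : dominated_graph G -> G (x0, r0) ->
  exists c, forall m r, G (m, r) -> r - p (m - x1) <= c /\ c <= p (m + x1) - r.
Proof.
move=> dG Gx0; have [Glin _ Gp] := dG.
have G00 := dominated_graph00 dG Gx0.
pose S := [set y | exists m r, G (m, r) /\ y = r - p (m - x1)].
have S_ub m' r' : G (m', r') -> ubound S (p (m' + x1) - r').
  move=> Gm' _ [m [r [Gm ->]]].
  rewrite lerBrDr addrAC lerBlDr.
  have := Gp _ _ (Glin 1 _ _ _ _ Gm Gm'); rewrite scale1r mul1r => /le_trans; apply.
  have -> : m + m' = (m - x1) + (m' + x1) by rewrite addrACA addNr addr0.
  by rewrite [X in _ <= X]addrC.
have S_bounded : has_ubound S by exists (p (0 + x1) - 0); exact: S_ub.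
exists (sup S) => m r Gm; split; first by apply: (ub_le_sup S_bounded); exists m, r.
by apply: ge_sup (S_ub _ _ Gm); exists (0 - p (0 - x1)), 0, 0.
Qed.

Lemma graph_adjoin_dominated G x1 c m r t : dominated_graph G ->
  (forall m r, G (m, r) -> r - p (m - x1) <= c /\ c <= p (m + x1) - r) ->
  G (m, r) -> r + t * c <= p (m + t *: x1).
Proof.
move=> dG c_gap Gm; have [_ _ Gp] := dG.
have [t0|t0|->] := ltgtP t 0; last by rewrite scale0r mul0r !addr0; exact: Gp.
- pose s := - t; have s0 : 0 < s by rewrite oppr_gt0.
  have [+ _] := c_gap _ _ (dominated_graphZ s^-1 dG Gm).
  rewrite lerBlDr -(ler_pM2l s0) mulrA divff ?gt_eqF // mul1r mulrDr.
  have -> : s^-1 *: m - x1 = s^-1 *: (m + t *: x1).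
    by rewrite scalerDr scalerA /s invrN mulNr mulVf ?ltr0_neq0 // scaleN1r.
  have := subhom_inv (m + t *: x1) s0; rewrite /s mulNr; lra.
- have [_ +] := c_gap _ _ (dominated_graphZ t^-1 dG Gm).
  rewrite lerBrDr -(ler_pM2l t0) mulrDr mulrA divff ?gt_eqF // mul1r.
  have -> : t^-1 *: m + x1 = t^-1 *: (m + t *: x1).
    by rewrite scalerDr scalerA mulVf ?gt_eqF // scale1r.
  have := subhom_inv (m + t *: x1) t0; rewrite [t * c]mulrC; lra.
Qed.

Lemma dominated_graph_adjoin G x1 c : dominated_graph G ->
  (forall m r, G (m, r) -> r - p (m - x1) <= c /\ c <= p (m + x1) - r) ->
  (forall r, ~ G (x1, r)) -> dominated_graph (graph_adjoin G x1 c).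
Proof.
move=> dG c_gap nGx1; have [Glin Gfun _] := dG; split.
- move=> a _ _ _ _ [m [r [t [Gm [-> ->]]]]] [m' [r' [t' [Gm' [-> ->]]]]].
  exists (a *: m + m'), (a * r + r'), (a * t + t'); split; first exact: Glin.
  congr (_, _); first by rewrite scalerDl scalerDr -scalerA addrACA.
  by rewrite mulrDl mulrDr mulrA addrACA.
- move=> _ _ _ [m [r [t [Gm [-> ->]]]]] [m' [r' [t' [Gm' [mt_eq ->]]]]].
  have [tt'|tt'] := eqVneq t t'.
    by subst t'; move: mt_eq => /addIr mm'; subst m'; rewrite (Gfun _ _ _ Gm Gm').
  exfalso; apply: (nGx1 ((t - t')^-1 * (- r + r'))).
  have -> : x1 = (t - t')^-1 *: ((-1) *: m + m').
    apply: (@scalerI _ _ (t - t')); first by rewrite subr_eq0.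
    rewrite scalerA divff ?subr_eq0 // scale1r scaleN1r scalerBl.
    by apply: (addrI m); rewrite addrA mt_eq addrK addNKr.
  by have := Glin (-1) _ _ _ _ Gm Gm'; rewrite mulN1r; exact: dominated_graphZ.
- by move=> _ _ [m [r [t [Gm [-> ->]]]]]; exact: graph_adjoin_dominated t dG c_gap Gm.
Qed.

Lemma graph_adjoin_proper G x1 c : G (0, 0) -> (forall r, ~ G (x1, r)) ->
  G `<` graph_adjoin G x1 c.
Proof.
move=> G00 nGx1; split=> [[m r] Gm|/(_ (x1, c)) Gx1c].
  by exists m, r, 0; rewrite scale0r mul0r !addr0.
by apply: (nGx1 c); apply: Gx1c; exists 0, 0, 1; rewrite scale1r mul1r !add0r.
Qed.

Theorem hahn_banach_line x0 c0 : x0 != 0 -> (forall t, t * c0 <= p (t *: x0)) ->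
  exists g : E -> R, [/\ forall a x y, g (a *: x + y) = a * g x + g y,
    forall x, g x <= p x & g x0 = c0].
Proof.
move=> x00 c0_le.
pose line := [set z : E * R | exists t, z = (t *: x0, t * c0)].
have line_seed : line (x0, c0) by exists 1; rewrite scale1r mul1r.
have line_dom : dominated_graph line.
  split.
  - move=> a _ _ _ _ [t [-> ->]] [t' [-> ->]]; exists (a * t + t').
    by rewrite scalerDl scalerA mulrDl mulrA.
  - move=> _ _ _ [t [-> ->]] [t' [tt' ->]].
    have /eqP : (t - t') *: x0 = 0 by rewrite scalerBl tt' subrr.
    by rewrite scaler_eq0 subr_eq0 (negbTE x00) orbF => /eqP ->.
  - by move=> _ _ [t [-> ->]]; exact: c0_le.
pose P G := dominated_graph G /\ (G !=set0 -> G (x0, c0)).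
have [A [[Adom Aseed] Amax]] : exists A, P A /\ forall B, A `<` B -> ~ P B.
  apply: Zorn_bigcup => F FP Ftot; split.
    by apply: dominated_graph_bigcup => // G /FP [].
  by move=> [z [G FG Gz]]; exists G => //; apply: (FP G FG).2; exists z.
have Ax0 : A (x0, c0).
  apply: Aseed; apply/set0P/eqP => A0.
  apply: (Amax line); last by split.
  by rewrite A0; split=> // /(_ _ line_seed).
have A_total x : exists r, A (x, r).
  apply: contrapT => nAx; have {}nAx r : ~ A (x, r) by move=> Axr; apply: nAx; exists r.
  have [c c_gap] := dominated_graph_gap x Adom Ax0.
  have AAc := graph_adjoin_proper c (dominated_graph00 Adom Ax0) nAx.
  apply: (Amax _ AAc); split; first exact: dominated_graph_adjoin.
  by move=> _; exact: AAc.1.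
pose g x := xget 0 [set r | A (x, r)].
have gP x : A (x, g x) by apply: (xgetPex 0 (A_total x)).
have [Alin Afun Ap] := Adom.
exists g; split.
- by move=> a x y; apply: Afun (gP _) (Alin a _ _ _ _ (gP x) (gP y)).
- by move=> x; exact: Ap (gP x).
- exact: Afun (gP x0) Ax0.
Qed.

End hahn_banach.

Section gauge.
Variables (R : realType) (E : lmodType R) (N : set E).

Definition gauge (x : E) : R := inf [set t | 0 < t /\ N (t^-1 *: x)].

Lemma gauge_le x t : 0 < t -> N (t^-1 *: x) -> gauge x <= t.
Proof. by move=> t0 Nt; apply: ge_inf => //; exists 0 => s [s0 _]; exact: ltW. Qed.

Hypothesis N_convex : convex_set N.
Hypothesis N0 : N 0.
Hypothesis N_absorbing : forall x, exists2 s, 0 < s & N (s *: x).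

Lemma gauge_set_neq0 x : [set t | 0 < t /\ N (t^-1 *: x)] !=set0.
Proof. have [s s0 Nsx] := N_absorbing x; by exists s^-1; split; rewrite ?invrK ?invr_gt0. Qed.

Lemma gauge_ge0 x : 0 <= gauge x.
Proof. by apply: lb_le_inf (gauge_set_neq0 x) _ => t [t0 _]; exact: ltW. Qed.

Lemma gaugeZ s x : 0 < s -> gauge (s *: x) <= s * gauge x.
Proof.
move=> s0; rewrite -ler_pdivrMl //.
apply: lb_le_inf (gauge_set_neq0 x) _ => t [t0 Nt].
rewrite ler_pdivrMl //; apply: gauge_le; first exact: mulr_gt0.
by rewrite scalerA [s * t]mulrC invfM -mulrA mulVf ?gt_eqF // mulr1.
Qed.

Lemma gaugeD x y : gauge (x + y) <= gauge x + gauge y.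
Proof.
rewrite [gauge x + _]addrC -lerBlDr.
apply: lb_le_inf (gauge_set_neq0 y) _ => t [t0 Nt].
rewrite lerBlDr [t + _]addrC -lerBlDr.
apply: lb_le_inf (gauge_set_neq0 x) _ => s [s0 Ns].
rewrite lerBlDr; apply: gauge_le; first exact: addr_gt0.
have st0 : 0 < s + t by exact: addr_gt0.
have -> : (s + t)^-1 *: (x + y) =
    (s / (s + t)) *: (s^-1 *: x) + (1 - s / (s + t)) *: (t^-1 *: y).
  have -> : 1 - s / (s + t) = t / (s + t).
    by rewrite -[1](divff (lt0r_neq0 st0)) -mulrBl [s + t]addrC addrK.
  rewrite !scalerA -!mulrA [_^-1 * s^-1]mulrC [_^-1 * t^-1]mulrC !mulrA.
  by rewrite !divff ?gt_eqF // !mul1r scalerDr.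
apply: (convex_setP N).1 => //; first by rewrite divr_ge0 // ltW.
by rewrite ler_pdivrMr // mul1r lerDl ltW.
Qed.

Lemma gauge_le1 x : N x -> gauge x <= 1.
Proof. by move=> Nx; apply: gauge_le; rewrite ?invr1 ?scale1r. Qed.

Lemma gauge_ge1 x : ~ N x -> 1 <= gauge x.
Proof.
move=> Nx; apply: lb_le_inf (gauge_set_neq0 x) _ => t [t0 Nt].
rewrite leNgt; apply/negP => t1; apply: Nx.
have := (convex_setP N).1 N_convex t _ _ (ltW t0) (ltW t1) Nt N0.
by rewrite scaler0 addr0 scalerA divff ?gt_eqF // scale1r.
Qed.

End gauge.

Section tvs_separation.
Variables (R : realType) (Z : tvsType R).

Lemma nbhs0_absorbing (N : set Z) x : nbhs 0 N -> exists2 s : R, 0 < s & N (s *: x).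
Proof.
move=> N0; have /= := @scale_continuous R Z (0, x) N.
rewrite scale0r => /(_ N0) [[P1 P2] /= [P10 P2x] P12].
have [e e0 Pe] := (nbhs_norm0P (V:=R^o)).1 P10.
exists (e / 2); first by rewrite divr_gt0.
apply: (P12 (e / 2, x)); split; last exact: nbhs_singleton.
apply: Pe => /=; rewrite ger0_norm ?divr_ge0 ?ltW //.
by rewrite ltr_pdivrMr // ltr_pMr // ltr1n.
Qed.

Lemma lin_bounded_continuous (g : Z -> R) (W : set Z) :
  (forall a x y, g (a *: x + y) = a * g x + g y) ->
  nbhs 0 W -> (forall v, W v -> `|g v| <= 1) -> continuous (g : Z -> R^o).
Proof.
move=> g_lin W0 gW y; apply/(cvgrPdist_le _ _).2 => eps eps0.
apply: filterS (nbhsT y (nbhs0Z (lt0r_neq0 eps0) W0)) => _ [_ [v Wv <-] <-] /=.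
rewrite (linD g_lin) (linZ g_lin) opprD addNKr normrN normrM gtr0_norm //.
by apply: ler_piMr; [exact: ltW | exact: gW].
Qed.

Lemma convex_nbhs0_separation (N : set Z) e :
  convex_set N -> nbhs 0 N -> ~ N e ->
  exists g : Z -> R, [/\ in_dual g, forall x, N x -> g x <= 1 & g e = 1].
Proof.
move=> N_convex N_nbhs0 Ne.
have N_absorbing x := nbhs0_absorbing x N_nbhs0.
have N0 : N 0 := nbhs_singleton N_nbhs0.
have e_neq0 : e != 0 by apply: contraPneq Ne => ->.
have e_seed t : t * 1 <= gauge N (t *: e).
  rewrite mulr1; have [t_le0|t0] := leP t 0.
    exact: le_trans t_le0 (gauge_ge0 N_absorbing _).
  have t0' : 0 < t^-1 by rewrite invr_gt0.
  have := gaugeZ N_absorbing (t *: e) t0'.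
  rewrite scalerA mulVf ?gt_eqF // scale1r.
  move=> /(le_trans (gauge_ge1 N_convex N0 N_absorbing Ne)) gauge_te.
  by rewrite -(ler_pM2l t0') mulVf ?gt_eqF.
have [g [g_lin g_gauge ge]] :=
  hahn_banach_line (gaugeD N_convex N_absorbing) (gaugeZ N_absorbing) e_neq0 e_seed.
have g_le1 x : N x -> g x <= 1 by move=> Nx; exact: le_trans (g_gauge x) (gauge_le1 Nx).
exists g; split=> //; split=> //.
apply: (lin_bounded_continuous g_lin (filterI N_nbhs0 (nbhs0N N_nbhs0))).
move=> v [Nv [w Nw wv]]; rewrite ler_norml g_le1 // andbT lerNl -(linN g_lin) -wv opprK.
exact: g_le1.
Qed.

Lemma locally_convex_nbhs (U : set Z) (z0 : Z) :
  nbhs z0 U -> exists B : set Z, [/\ convex_set B, nbhs z0 B & B `<=` U].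
Proof.
move=> Uz0; have [Bs Bs_convex [Bs_open Bs_basis]] := @locally_convex R Z.
have [B [BsB Bz0] BU] := Bs_basis z0 _ Uz0.
exists B; split=> //; first by apply: Bs_convex; rewrite inE.
by apply: open_nbhs_nbhs; split=> //; exact: Bs_open.
Qed.

Lemma closed_convex_separation (A : set Z) z0 a0 :
  A a0 -> closed A -> convex_set A -> ~ A z0 ->
  exists g : Z -> R, in_dual g /\ exists2 d, 0 < d & forall a, A a -> g a + d <= g z0.
Proof.
move=> Aa0 A_closed A_convex Az0.
have [B [B_convex Bz0 BA]] : exists B : set Z, [/\ convex_set B, nbhs z0 B & B `<=` ~` A].
  by apply: locally_convex_nbhs; apply: open_nbhs_nbhs; split=> //; exact: closed_openC.
have W0 : nbhs 0 [set v | B (z0 - v)].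
  have := nbhsB (- z0) Bz0; rewrite addNr => /nbhs0N.
  apply: filterS => _ [_ [b Bb <-] <-] /=.
  by rewrite opprK addNKr.
(* N = (A - a0) - (B - z0): a convex neighbourhood of 0 missing z0 - a0 *)
pose N := [set w | exists a b, [/\ A a, B b & w = (a - a0) - (b - z0)]].
have N_convex : convex_set N.
  apply/convex_setP => l _ _ l0 l1 [a [b [Aa Bb ->]]] [a' [b' [Aa' Bb' ->]]].
  exists (l *: a + (1 - l) *: a'), (l *: b + (1 - l) *: b'); split.
  - exact: (convex_setP A).1.
  - exact: (convex_setP B).1.
  - by rewrite scale_comb_sub !scale_comb_sub !scale_comb_id.
have N0 : nbhs 0 N.
  apply: filterS W0 => v Bv; exists a0, (z0 - v); split=> //.
  by rewrite subrr sub0r opprB subKr.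
have Ne : ~ N (z0 - a0).
  move=> [a [b [Aa Bb ab]]]; apply: (BA b Bb); suff -> : b = a by [].
  apply/eqP; rewrite eq_sym -subr_eq0; apply/eqP/(addIr (z0 - a0)).
  by rewrite add0r {2}ab opprB [z0 - a0]addrC addrACA [- b + z0]addrC.
have [g [g_dual g_le1 ge]] := convex_nbhs0_separation N_convex N0 Ne.
have [s s0 Bs] := nbhs0_absorbing (z0 - a0) W0.
exists g; split=> //; exists s => // a Aa.
have := g_le1 _ (ex_intro _ a (ex_intro _ (z0 - s *: (z0 - a0)) (And3 Aa Bs erefl))).
have [g_lin _] := g_dual.
have : g z0 - g a0 = 1 by rewrite -(linB g_lin).
rewrite !(linB g_lin) (linZ g_lin) ge; lra.
Qed.

End tvs_separation.

Section in_FZC.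
Variables (R : realType) (Z : tvsType R) (C A : set Z).
Hypothesis A_FZC : in_FZC C A.

Lemma in_FZC_closed : closed A.
Proof. by rewrite A_FZC; exact: closed_closure. Qed.

Lemma in_FZC_addr a c : A a -> C c -> A (a + c).
Proof. by move=> Aa Cc; rewrite A_FZC; apply: subset_closure; exists a => //; exists c. Qed.

Lemma separating_functional_polar (g : Z -> R) z0 a0 d :
  (forall t z, 0 <= t -> C z -> C (t *: z)) -> in_dual g -> A a0 -> 0 < d ->
  (forall a, A a -> g a + d <= g z0) -> polar_cone C g.
Proof.
move=> C_cone g_dual Aa0 d0 g_gap; split=> // c Cc; rewrite leNgt; apply/negP => gc0.
(* moving a0 far enough along the ray through c would cross the level g z0 *)
pose t := (g z0 - g a0) / g c.
have t0 : 0 <= t by rewrite divr_ge0 ?ltW //; have := g_gap _ Aa0; lra.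
have := g_gap _ (in_FZC_addr Aa0 (C_cone t c t0 Cc)).
rewrite [a0 + _]addrC g_dual.1 /t -mulrA mulVf ?gt_eqF // mulr1; lra.
Qed.

End in_FZC.

Section lattice_semicontinuity.
Variables (R : realType) (X : topologicalType) (Z : tvsType R).
Variables (f : X -> set Z) (x0 : X).

Lemma phi_ge (g : Z -> R) x (r : R) :
  (forall z, f x z -> r <= - g z) -> (r%:E <= phi f g x)%E.
Proof. by move=> r_le; apply: le_ereal_inf_tmp => _ [z fz <-]; rewrite lee_fin r_le. Qed.

Lemma lsc_phi_notin_lattice_limit (g : Z -> R) (z0 : Z) (r : R) :
  in_dual g -> lsc_at (phi f g) x0 -> (r%:E < phi f g x0)%E -> - g z0 < r ->
  ~ (\bigcap_(U in nbhs x0) closure (\bigcup_(x in U) f x)) z0.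
Proof.
move=> [_ g_cont] phi_lsc r_lt gz0_lt z0_lim.
have [V V_x0 r_lt_phi] := phi_lsc r r_lt.
have gz0 : \forall z \near z0, - r < g z.
  by apply: (@cvgr_gt R Z (nbhs z0) _ g (g z0) (g_cont z0)); rewrite ltrNl.
have [z [[x Vx fxz] gz]] := z0_lim V V_x0 _ gz0.
have := r_lt_phi x Vx; apply/negP; rewrite -leNgt.
apply: le_trans (ereal_inf_lbound (ex_intro2 _ _ z fxz erefl)) _.
by rewrite lee_fin ltW // ltrNl.
Qed.

End lattice_semicontinuity.

Unset Implicit Arguments. Set Strict Implicit.

Theorem mainTheorem15 (R : realType) (X : topologicalLmodType R)
  (Z : tvsType R) (C : set Z) (f : X -> set Z) (x0 : X) :
  C !=set0 ->
  closed_convex_cone C ->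
  (exists g : Z -> R, polar_cone C g /\ g <> (fun _ => 0)) ->
  (forall x, in_FZC C (f x)) ->
  convex_set (f x0) ->
  (forall g : Z -> R, polar_cone C g -> g <> (fun _ => 0) ->
     lsc_at (phi f g) x0) ->
  lower_lattice_sc_at f x0.
Proof.
move=> _ [_ [_ C_cone]] [g1 [g1_polar g1_neq0]] f_FZC fx0_convex phi_lsc z0 z0_lim.
apply: contrapT => fx0z0.
have [[a0 fa0]|fx0_empty] := pselect (f x0 !=set0); last first.
  apply: (lsc_phi_notin_lattice_limit (r := - g1 z0 + 1) g1_polar.1
    (phi_lsc _ g1_polar g1_neq0) _ _ z0_lim); last by rewrite ltrDl.
  apply: (@lt_le_trans _ _ (- g1 z0 + 2)%:E); first by rewrite lte_fin; lra.
  by apply: phi_ge => z fz; exfalso; apply: fx0_empty; exists z.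
have [g [g_dual [d d0 g_gap]]] :=
  closed_convex_separation fa0 (in_FZC_closed (f_FZC x0)) fx0_convex fx0z0.
have g_polar := separating_functional_polar (f_FZC x0) C_cone g_dual fa0 d0 g_gap.
have g_neq0 : g <> (fun _ => 0) by move=> g0; have := g_gap _ fa0; rewrite g0; lra.
apply: (lsc_phi_notin_lattice_limit (r := - g z0 + d / 2) g_dual
  (phi_lsc _ g_polar g_neq0) _ _ z0_lim); last by rewrite ltrDl divr_gt0.
apply: (@lt_le_trans _ _ (- g z0 + d)%:E); first by rewrite lte_fin; lra.
by apply: phi_ge => z fz; have := g_gap _ fz; lra.
Qed.
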